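(* Let $\ell^\infty$ be the space of bounded real sequences with the topology of the sup norm, and let $\mathcal{C}(\ell^\infty,(\ell^\infty)^* )$ be the $\sigma$-algebra on $\ell^\infty$ generated by all continuous linear functionals on $\ell^\infty$. Then $(\ell^\infty,\text{norm topology},\mathcal{C}(\ell^\infty,(\ell^\infty)^* ))$ satisfies: (LM1) every point admits a local basis of neighborhoods consisting of measurable sets; (LM2) every continuous linear functional is measurable; (LM3) the addition $(x,y)\mapsto x+y$ is measurable from the product $\sigma$-algebra $\mathcal{C}(\ell^\infty,(\ell^\infty)^* )^{\otimes2}$ to $\mathcal{C}(\ell^\infty,(\ell^\infty)^* )$; (LM4) the $\sigma$-algebra is invariant under dilations $x\mapsto tx$, $t\ne0$. *)

From HB Require Import structures.
From mathcomp Require Import all_boot all_order all_algebra.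
From mathcomp Require Import all_classical all_reals all_analysis.
Set Implicit Arguments. Unset Strict Implicit. Unset Printing Implicit Defensive.
Import Order.TTheory GRing.Theory Num.Theory.
Local Open Scope classical_set_scope.
Local Open Scope ring_scope.

Record linf (R : realType) := Linf {
  lseq : nat -> R ;
  lbnd : exists M : R, forall n, `|lseq n| <= M }.

Section Linf.
Variable R : realType.

Lemma ladd_bnd (x y : linf R) :
  exists M : R, forall n, `|lseq x n + lseq y n| <= M.
Proof.
case: (lbnd x) => M1 H1; case: (lbnd y) => M2 H2.
exists (M1 + M2) => n; apply: le_trans (ler_normD _ _) _; exact: lerD.
Qed.

Lemma lscale_bnd (t : R) (x : linf R) :
  exists M : R, forall n, `|t * lseq x n| <= M.
Proof.
case: (lbnd x) => M H; exists (`|t| * M) => n; rewrite normrM.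
exact: ler_wpM2l.
Qed.

Definition ladd (x y : linf R) : linf R :=
  @Linf R (fun n => lseq x n + lseq y n) (ladd_bnd x y).
Definition lscale (t : R) (x : linf R) : linf R :=
  @Linf R (fun n => t * lseq x n) (lscale_bnd t x).

Definition ldist (x y : linf R) : R :=
  sup [set `|lseq x n - lseq y n| | n in [set: nat]].

Definition linf_nbhs (x : linf R) (N : set (linf R)) : Prop :=
  exists2 r : R, 0 < r & [set y | ldist x y < r] `<=` N.

Definition linf_continuous (f : linf R -> R) : Prop :=
  forall (x : linf R) (e : R), 0 < e ->
    exists2 d : R, 0 < d &
      forall y, ldist x y < d -> `|f y - f x| < e.

Definition linf_linear (f : linf R -> R) : Prop :=
  (forall x y, f (ladd x y) = f x + f y) /\
  (forall t x, f (lscale t x) = t * f x).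

Definition linf_dual (f : linf R -> R) : Prop :=
  linf_linear f /\ linf_continuous f.

Definition Cyl : set (set (linf R)) :=
  <<s [set f @^-1` B | f in linf_dual & B in [set B : set R | measurable B]] >>.

Definition Cyl2 : set (set (linf R * linf R)) :=
  <<s [set A `*` B | A in Cyl & B in Cyl] >>.

End Linf.

(* Closed sup-norm balls are countable intersections of preimages of intervals
   under the coordinate functionals, which are continuous and linear; this gives
   measurable local bases.  For the other properties it suffices to pull back the
   generators f^-1(B): along addition, f (x + y) = f x + f y is a Borel function
   of the pair (f x, f y), and along a dilation, f (t x) = t f x with t f again a
   continuous linear functional.  Since x |-> t x is a bijection with inverse
   x |-> t^-1 x, dilation images are preimages, which gives invariance. *)
From HB Require Import structures.
From mathcomp Require Import all_boot all_order all_algebra.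
From mathcomp Require Import all_classical all_reals all_analysis.
From mathcomp Require Import measurable_realfun.
Import Order.TTheory GRing.Theory Num.Theory.
Local Open Scope classical_set_scope.
Local Open Scope ring_scope.

Lemma image_can_preimage {T U : Type} {f : T -> U} {g : U -> T} (A : set T) :
  cancel f g -> cancel g f -> f @` A = g @^-1` A.
Proof.
move=> fK gK; apply/seteqP; split=> [_ [a Aa <-]|y Agy] /=; first by rewrite fK.
by exists (g y); rewrite ?gK.
Qed.

Lemma sigma_algebra_bigcapT {T : Type} (S : set (set T)) (F : (set T)^nat) :
  sigma_algebra setT S -> (forall n, S (F n)) -> S (\bigcap_n F n).
Proof.
move=> sigmaS SF; have [_ SC SU] := sigmaS.
have -> : \bigcap_n F n = setT `\` \bigcup_n (setT `\` F n).
  by rewrite setTD setC_bigcup; apply: eq_bigcapr => n _; rewrite setTD setCK.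
by apply: (SC); apply: SU => n; apply: SC.
Qed.

Lemma g_sigma_preimage {T U : Type} (h : T -> U) (G : set (set U))
    (S : set (set T)) :
  sigma_algebra setT S -> (forall B, G B -> S (h @^-1` B)) ->
  forall B, <<s G >> B -> S (h @^-1` B).
Proof.
move=> sigmaS GS B GB.
have G_image : G `<=` image_set_system setT h S.
  by move=> C /GS; rewrite /image_set_system /= setTI.
have := smallest_sub (sigma_algebra_image h sigmaS) G_image GB.
by rewrite /image_set_system /= setTI.
Qed.

Lemma g_sigma_prod_preimage (R : realType) {T1 T2 : Type}
    (S1 : set (set T1)) (S2 : set (set T2)) (f : T1 -> R) (g : T2 -> R) :
  (forall B : set R, measurable B -> S1 (f @^-1` B)) ->
  (forall B : set R, measurable B -> S2 (g @^-1` B)) ->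
  forall P : set (R * R), measurable P ->
    <<s [set A `*` B | A in S1 & B in S2] >> ((fun p => (f p.1, g p.2)) @^-1` P).
Proof.
move=> S1f S2g P; rewrite measurable_prod_measurableType.
apply: g_sigma_preimage; first exact: smallest_sigma_algebra.
move=> _ [A1 mA1 [A2 mA2 <-]]; apply: sub_sigma_algebra.
by exists (f @^-1` A1); [exact: S1f | exists (g @^-1` A2); first exact: S2g].
Qed.

Section linf_measurable.
Variable R : realType.
Implicit Types (x y : linf R) (f : linf R -> R) (A : set (linf R)).

Lemma lseq_inj : injective (@lseq R).
Proof.
case=> [sx px] [sy py] /= E; subst sy.
by rewrite (Prop_irrelevance px py).
Qed.

Lemma ler_ldist x y n : `|lseq x n - lseq y n| <= ldist x y.
Proof.
apply: ub_le_sup; last by exists n.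
case: (lbnd x) => Mx Hx; case: (lbnd y) => My Hy.
exists (Mx + My) => _ [m _ <-].
by apply: le_trans (ler_normB _ _) _; exact: lerD.
Qed.

Lemma ldist_le {x y} {e : R} :
  (forall n, `|lseq x n - lseq y n| <= e) -> ldist x y <= e.
Proof.
move=> xye; apply: ge_sup; first by exists `|lseq x 0 - lseq y 0|, 0%N.
by move=> _ [m _ <-].
Qed.

Lemma lproj_dual n : linf_dual (fun y => lseq y n).
Proof.
split; first by split.
move=> x e e0; exists e => // y xy.
by rewrite distrC; apply: le_lt_trans (ler_ldist x y n) xy.
Qed.

Lemma linf_dual_scale (s : R) {f} : linf_dual f -> linf_dual (fun x => s * f x).
Proof.
move=> [[fD fZ] fc]; split; first split.
- by move=> x y; rewrite fD mulrDr.
- by move=> t x; rewrite fZ mulrCA.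
move=> x e e0.
have s1 : 0 < `|s| + 1 by apply: ltr_wpDl.
have [d d0 fd] := fc x (e / (`|s| + 1)) (divr_gt0 e0 s1).
exists d => // y xy; rewrite -mulrBr normrM.
apply: le_lt_trans (ler_wpM2l (normr_ge0 s) (ltW (fd y xy))) _.
rewrite -[ltRHS](divfK (lt0r_neq0 s1) e) mulrDr mulr1 mulrC.
by rewrite ltrDl divr_gt0.
Qed.

Lemma Cyl_sigma_algebra : sigma_algebra setT (@Cyl R).
Proof. exact: smallest_sigma_algebra. Qed.

Lemma Cyl2_sigma_algebra : sigma_algebra setT (@Cyl2 R).
Proof. exact: smallest_sigma_algebra. Qed.

Lemma Cyl_dual {f} {B : set R} :
  linf_dual f -> measurable B -> @Cyl R (f @^-1` B).
Proof. by move=> fd mB; apply: sub_sigma_algebra; exists f => //; exists B. Qed.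

Definition lcball x (r : R) : set (linf R) :=
  [set y | forall n, `|lseq x n - lseq y n| <= r].

Lemma Cyl_lcball x r : @Cyl R (lcball x r).
Proof.
have -> : lcball x r =
    \bigcap_n ((fun y => lseq y n) @^-1` `[lseq x n - r, lseq x n + r]).
  by apply/seteqP; split=> y xy n; [move=> _; have := xy n | have := xy n I];
    rewrite /= in_itv /= ler_distlC.
apply: sigma_algebra_bigcapT; first exact: Cyl_sigma_algebra.
by move=> n; apply: Cyl_dual; [exact: lproj_dual | exact: measurable_itv].
Qed.

Lemma linf_nbhs_lcball x r : 0 < r -> linf_nbhs x (lcball x r).
Proof.
by move=> r0; exists r => // y xy n; apply/ltW/(le_lt_trans (ler_ldist x y n)).
Qed.

Lemma lcball_sub_ldist x (r r' : R) :
  r < r' -> lcball x r `<=` [set y | ldist x y < r'].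
Proof. by move=> rr' y xy; apply: le_lt_trans (ldist_le xy) rr'. Qed.

Lemma linf_nbhs_Cyl x N :
  linf_nbhs x N -> exists V, [/\ @Cyl R V, linf_nbhs x V & V `<=` N].
Proof.
move=> [r r0 rN]; have r20 : 0 < r / 2 by rewrite divr_gt0.
exists (lcball x (r / 2)); split; [exact: Cyl_lcball | exact: linf_nbhs_lcball |].
apply: subset_trans rN; apply: lcball_sub_ldist.
by rewrite ltr_pdivrMr // ltr_pMr // ltr1n.
Qed.

Lemma Cyl_lscale_preimage (s : R) A : @Cyl R A -> @Cyl R (lscale s @^-1` A).
Proof.
apply: g_sigma_preimage; first exact: Cyl_sigma_algebra.
move=> _ [f fd [B mB <-]].
have -> : lscale s @^-1` (f @^-1` B) = (fun x => s * f x) @^-1` B.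
  by apply/funext => x /=; rewrite fd.1.2.
exact: Cyl_dual (linf_dual_scale s fd) mB.
Qed.

Lemma lscaleK {t : R} : t != 0 -> cancel (lscale t) (lscale t^-1).
Proof. by move=> t0 x; apply: lseq_inj; apply/funext => n /=; rewrite mulKf. Qed.

Lemma lscaleVK {t : R} : t != 0 -> cancel (lscale t^-1) (lscale t).
Proof. by move=> t0 x; apply: lseq_inj; apply/funext => n /=; rewrite mulVKf. Qed.

Lemma Cyl_lscale_image (t : R) A : t != 0 -> @Cyl R (lscale t @` A) <-> @Cyl R A.
Proof.
move=> t0; rewrite (image_can_preimage _ (lscaleK t0) (lscaleVK t0)).
split=> [|/Cyl_lscale_preimage //] /(Cyl_lscale_preimage t).
suff -> : lscale t @^-1` (lscale t^-1 @^-1` A) = A by [].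
by apply/seteqP; split=> x /=; rewrite lscaleK.
Qed.

Lemma Cyl2_ladd_preimage D :
  @Cyl R D -> @Cyl2 R ((fun p : linf R * linf R => ladd p.1 p.2) @^-1` D).
Proof.
apply: g_sigma_preimage; first exact: Cyl2_sigma_algebra.
move=> _ [f fd [B mB <-]].
have -> : (fun p : linf R * linf R => ladd p.1 p.2) @^-1` (f @^-1` B) =
          (fun p => (f p.1, f p.2)) @^-1` ((fun q : R * R => q.1 + q.2) @^-1` B).
  by apply/funext => p /=; rewrite fd.1.1.
apply: g_sigma_prod_preimage => [C mC|C mC|]; try exact: Cyl_dual.
have := measurable_funD (@measurable_fst _ _ R R) (@measurable_snd _ _ R R)
  measurableT mB.
by rewrite setTI.
Qed.

End linf_measurable.

Theorem proposition5p1 (R : realType) :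
  (* (LM1) local bases of measurable neighborhoods *)
  (forall (x : linf R) (N : set (linf R)), linf_nbhs x N ->
     exists V, [/\ @Cyl R V, linf_nbhs x V & V `<=` N]) /\
  (* (LM2) continuous linear functionals are measurable *)
  (forall f : linf R -> R, linf_dual f ->
     forall B : set R, measurable B -> @Cyl R (f @^-1` B)) /\
  (* (LM3) addition is Cyl (x) Cyl / Cyl measurable *)
  (forall D, @Cyl R D ->
     @Cyl2 R ((fun p : linf R * linf R => ladd p.1 p.2) @^-1` D)) /\
  (* (LM4) invariance under dilations *)
  (forall t : R, t != 0 ->
     forall A : set (linf R), @Cyl R (lscale t @` A) <-> @Cyl R A).
Proof.
split; first exact: linf_nbhs_Cyl.
split; first by move=> f fd B; exact: Cyl_dual.
split; first exact: Cyl2_ladd_preimage.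
by move=> t t0 A; exact: Cyl_lscale_image.
Qed.
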